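(* Let $q,z,m$ be positive integers with $q\geq 2$ and $z<q$, and put $L=\lfloor\frac{q-1}{q-z}\rfloor$. Let rows be indexed by $\mathcal{F}=\{(a_0,\ldots,a_{m-1},\varepsilon): a_l\in\mathbb{Z}_q,\ \varepsilon\in\{0,\ldots,L-1\}\}$. Define the $Lq^m\times mq$ array $\mathbf{P}=(p_{\mathbf{a},(b,\delta)})$ with columns $(b,\delta)$, $b\in\mathbb{Z}_q$, $0\leq\delta<m$, by: $p_{\mathbf{a},(b,\delta)}=*$ if $a_\delta\in\{b,b-1,\ldots,b-(z-1)\}$, and otherwise $p_{\mathbf{a},(b,\delta)}=(a_0,\ldots,a_{\delta-1},\,b-\varepsilon(q-z),\,a_{\delta+1},\ldots,a_{m-1},\,a_\delta-b-1)$. Define the $Lq^m\times q$ array $\mathbf{C}=(c_{\mathbf{a},(b,m)})$ with columns $(b,m)$, $b\in\mathbb{Z}_q$, by: writing $\sigma=\sum_{l=0}^{m-1}a_l-\varepsilon(q-z)$, $c_{\mathbf{a},(b,m)}=*$ if $\sigma\in\{b,b+1,\ldots,b+(z-1)\}$, and otherwise $c_{\mathbf{a},(b,m)}=(a_0,\ldots,a_{m-1},\,b-\sigma-1)$. All arithmetic is modulo $q$. Then $\mathbf{H}=(\mathbf{P},\mathbf{C})$ (the columns of $\mathbf{P}$ followed by those of $\mathbf{C}$) is an $\big((m+1)q,\ Lq^m,\ zLq^{m-1},\ (q-z)q^m\big)$ placement delivery array. In particular the associated coded caching scheme has $\frac{M}{N}=\frac{z}{q}$ and rate $R=(q-z)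/L$.
   Context: A $(K,F,Z,S)$ placement delivery array (PDA) is an $F\times K$ array whose entries are either a special symbol $*$ or one of $S$ distinct non-star symbols (identified with $1,\ldots,S$), such that: (C1) $*$ appears exactly $Z$ times in each column; (C2) each of the $S$ symbols occurs at least once; (C3) for any two distinct entries $p_{j_1,k_1}=p_{j_2,k_2}=s$ with $s$ a non-star symbol, we have $j_1\neq j_2$, $k_1\neq k_2$, and $p_{j_1,k_2}=p_{j_2,k_1}=*$. A $(K,F,Z,S)$ PDA yields an $F$-division coded caching scheme for $K$ users with memory ratio $M/N=Z/F$ and rate $R=S/F$. The non-star symbols here are vectors in $\mathbb{Z}_q^{m+1}$. *)

From HB Require Import structures.
From mathcomp Require Import all_boot all_order all_algebra.
Set Implicit Arguments. Unset Strict Implicit. Unset Printing Implicit Defensive.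
Import GRing.Theory.
Local Open Scope ring_scope.

(* A PDA is an array indexed by a finite row type (F rows) and a finite
   column type (K columns); an entry is [None] for the star symbol and
   [Some s] for a non-star symbol s. *)
Definition is_PDA (Row Col Sym : finType) (p : Row -> Col -> option Sym)
  (K F Z S : nat) : Prop :=
  [/\ #|Col| = K, #|Row| = F,
      (forall k : Col, #|[set j : Row | p j k == None]| = Z),
      #|[set s : Sym | [exists j : Row, exists k : Col, p j k == Some s]]| = S &
      (forall (j1 j2 : Row) (k1 k2 : Col) (s : Sym),
         p j1 k1 = Some s -> p j2 k2 = Some s -> (j1, k1) <> (j2, k2) ->
         [/\ j1 <> j2, k1 <> k2, p j1 k2 = None & p j2 k1 = None])]%N.

Definition rowT (q m L : nat) := ({ffun 'I_m -> 'Z_q} * 'I_L)%type.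
(* Columns: inl (b, delta) for P, inr b for C (the column (b,m)). *)
Definition colT (q m : nat) := (('Z_q * 'I_m) + 'Z_q)%type.
Definition symT (q m : nat) := {ffun 'I_m.+1 -> 'Z_q}.

Definition Lpar (q z : nat) : nat := ((q - 1) %/ (q - z))%N.

Definition Pentry (q z m : nat) (r : rowT q m (Lpar q z)) (b : 'Z_q) (d : 'I_m)
  : option (symT q m) :=
  let a := r.1 in let eps := r.2 in
  if [exists i : 'I_z, a d == b - (i : nat)%:R] then None
  else Some [ffun i : 'I_m.+1 =>
               match unlift ord_max i with
               | Some l => if l == d then b - (eps : nat)%:R * (q - z)%:R else a l
               | None => a d - b - 1
               end].

Definition Centry (q z m : nat) (r : rowT q m (Lpar q z)) (b : 'Z_q)
  : option (symT q m) :=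
  let a := r.1 in let eps := r.2 in
  let sigma := \sum_(l < m) a l - (eps : nat)%:R * (q - z)%:R in
  if [exists i : 'I_z, sigma == b + (i : nat)%:R] then None
  else Some [ffun i : 'I_m.+1 =>
               match unlift ord_max i with
               | Some l => a l
               | None => b - sigma - 1
               end].

Definition Harray (q z m : nat) (r : rowT q m (Lpar q z)) (c : colT q m)
  : option (symT q m) :=
  match c with
  | inl (b, d) => @Pentry q z m r b d
  | inr b => @Centry q z m r b
  end.

(* Every star condition says that a distance x in Z_q (b - a_delta for P,
   sigma - b for C) lies in the window [0, z), and a non-star entry has last
   coordinate -x - 1.  Hence the last coordinates of symbols are exactly the
   values in [0, q - z), each attained with arbitrary first m coordinates (in
   column C of a row with eps = 0), giving (q - z) q^m symbols; and in each
   column the window constrains one coordinate of a (for C, the sum of the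
   coordinates), giving z q^(m-1) stars for each eps.
   For C3, two occurrences of a symbol determine each other's rows up to the
   offsets eps (q - z), eps < L, which lie in [0, z) and are spaced q - z
   apart.  The crossed distance is then either such an offset or a non-star
   distance moved by a nonzero difference of two offsets; both land in the
   window, so the crossed entries are stars. *)

From mathcomp Require Import all_boot all_order all_algebra.
From mathcomp Require Import zify ring.
Set Implicit Arguments. Unset Strict Implicit. Unset Printing Implicit Defensive.
Import GRing.Theory.
Local Open Scope ring_scope.

Lemma card_prod_pred (A B : finType) (Q : pred (A * B)) :
  #|Q| = (\sum_(b : B) #|[pred a | Q (a, b)]|)%N.
Proof.
rewrite -sum1_card (eq_bigr (fun b => \sum_(a | Q (a, b)) 1)%N) => [|b _].
  by rewrite (exchange_big_dep xpredT) //= pair_big_dep; apply: eq_bigl => -[].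
by rewrite sum1_card.
Qed.

Lemma card_ord_ltn n k : (k <= n)%N -> #|[pred i : 'I_n | (i < k)%N]| = k.
Proof. by move=> le_kn; rewrite -sum1_card (big_ord_narrow le_kn) sum1_card card_ord. Qed.

Lemma PDA_C3_of_cross (Row Col Sym : finType) (p : Row -> Col -> option Sym) :
  (forall j1 j2 k1 k2 s, p j1 k1 = Some s -> p j2 k2 = Some s -> (j1, k1) <> (j2, k2) ->
     p j1 k2 = None) ->
  forall j1 j2 k1 k2 s, p j1 k1 = Some s -> p j2 k2 = Some s -> (j1, k1) <> (j2, k2) ->
    [/\ j1 <> j2, k1 <> k2, p j1 k2 = None & p j2 k1 = None].
Proof.
move=> cross j1 j2 k1 k2 s ent1 ent2 ne.
have star12 := cross _ _ _ _ _ ent1 ent2 ne.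
have star21 := cross _ _ _ _ _ ent2 ent1 (fun eq_jk => ne (esym eq_jk)).
by split=> // [eq_j|eq_k]; [rewrite eq_j ent2 in star12 | rewrite -eq_k ent1 in star12].
Qed.

Section FfunCounting.
Variable I : finType.

Lemma card_ffun_coord (T : finType) (P : pred T) (d : I) :
  #|[set a : {ffun I -> T} | P (a d)]| = (#|P| * #|T| ^ #|I|.-1)%N.
Proof.
pose F i := if i == d then mem P else mem T.
have -> : #|[set a : {ffun I -> T} | P (a d)]| = #|family F|.
  apply: eq_card => a; rewrite inE; apply/idP/familyP => [Pad i|/(_ d)].
    by rewrite /F; case: eqP => [->|].
  by rewrite /F eqxx.
rewrite card_family foldrE big_image /= (bigD1 d) //= /F eqxx.
rewrite (eq_bigr (fun => #|T|)) => [|i /negbTE -> //].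
by rewrite prod_nat_const cardC1.
Qed.

Variable V : finZmodType.

Lemma card_pred_subr (P : pred V) (b : V) : #|[pred x | P (b - x)]| = #|P|.
Proof.
rewrite -cardsE -(card_preimset _ (can_inj (subKr b))).
by apply: eq_card => x; rewrite !inE subKr.
Qed.

Lemma card_ffun_sum (P : pred V) (d : I) (c : V) :
  #|[set a : {ffun I -> V} | P (\sum_i a i + c)]| = (#|P| * #|V| ^ #|I|.-1)%N.
Proof.
pose g (a : {ffun I -> V}) := [ffun i => if i == d then \sum_j a j + c else a i].
have g_inj : injective g.
  move=> a a' /ffunP eq_g.
  have eq_off i : i != d -> a i = a' i.
    by move=> ne_id; have := eq_g i; rewrite !ffunE (negbTE ne_id).
  have := eq_g d; rewrite !ffunE eqxx (bigD1 d) //= [X in _ = X + _](bigD1 d) //=.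
  rewrite (eq_bigr a') => [/addIr/addIr eq_d|i /eq_off //].
  by apply/ffunP => i; have [->|/eq_off] := eqVneq i d.
rewrite -(card_ffun_coord P d) -[RHS](card_preimset _ g_inj).
by apply: eq_card => a; rewrite !inE ffunE eqxx.
Qed.
End FfunCounting.

Section ZpValue.
Variable p : nat.
Local Notation q := p.+2.
Implicit Types x y : 'Z_q.

Lemma val_ZpD x y :
  nat_of_ord (x + y) = if (x + y < q)%N then (x + y)%N else (x + y - q)%N.
Proof.
have := ltn_ord x; have := ltn_ord y; rewrite /= -/q => lt_yq lt_xq.
case: ifP => [lt_xyq|/negbT]; first by rewrite modn_small.
by rewrite -leqNgt => le_qxy; rewrite -(subnK le_qxy) modnDr modn_small; lia.
Qed.

Lemma val_ZpN x : nat_of_ord (- x) = if nat_of_ord x == 0%N then 0%N else (q - x)%N.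
Proof.
case: x => [x lt_xq] /=; case: eqP => [->|ne_x0]; first by rewrite subn0 modnn.
by rewrite modn_small //; lia.
Qed.

Lemma val_ZpB x y :
  nat_of_ord (x - y) = if (y <= x)%N then (x - y)%N else (q + x - y)%N.
Proof.
rewrite val_ZpD val_ZpN; case: x y => [x lt_xq] [y lt_yq] /=.
have {}lt_xq : (x < q)%N := lt_xq; have {}lt_yq : (y < q)%N := lt_yq.
case: eqP => [->|ne_y0]; first by rewrite addn0 lt_xq subn0.
by do ?case: ifP; lia.
Qed.

Lemma val_Zp_small k : (k < q)%N -> nat_of_ord (k%:R : 'Z_q) = k.
Proof. by move=> lt_kq; rewrite Zp_nat /= modn_small. Qed.

Lemma val_Zp_opp_sub1 x : nat_of_ord (- x - 1) = (q - x.+1)%N.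
Proof.
have val1 : nat_of_ord (1 : 'Z_q) = 1%N by [].
rewrite val_ZpB val_ZpN val1; case: x => [x lt_xq] /=; have {}lt_xq : (x < q)%N := lt_xq.
case: eqP => [->|ne_x0]; first by rewrite ltnn; lia.
by case: ifP; lia.
Qed.

Lemma val_Zp_opp_sub1_lt k x : (k <= x)%N -> (k < q)%N -> ((- x - 1)%R < q - k)%N.
Proof. by rewrite val_Zp_opp_sub1; lia. Qed.

Lemma val_Zp_opp_sub1_ge k x : (x < q - k)%N -> (k <= (- x - 1)%R)%N.
Proof. by have : (x < q)%N := ltn_ord x; rewrite val_Zp_opp_sub1; lia. Qed.

Lemma exists_eq_sub_natrZp (z : nat) x y :
  [exists i : 'I_z, x == y - (i : nat)%:R] = (nat_of_ord (y - x)%R < z)%N.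
Proof.
apply/existsP/idP => [[i /eqP ->]|lt_yxz].
  rewrite opprB addrC subrK Zp_nat /=; exact: leq_ltn_trans (leq_mod _ _) (ltn_ord i).
exists (Ordinal lt_yxz).
by rewrite -[X in _ - X]/(nat_of_ord (y - x))%:R natr_Zp opprB addrC subrK.
Qed.

Lemma exists_eq_add_natrZp (z : nat) x y :
  [exists i : 'I_z, x == y + (i : nat)%:R] = (nat_of_ord (x - y)%R < z)%N.
Proof.
rewrite -exists_eq_sub_natrZp; apply: eq_existsb => i.
by rewrite [RHS]eq_sym subr_eq.
Qed.
End ZpValue.

Section Offsets.
Variables p z : nat.
Local Notation q := p.+2.
Local Notation L := (Lpar q z).
Hypothesis lt_zq : (z < q)%N.

Definition offset (u : nat) : 'Z_q := u%:R * (q - z)%:R.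

Lemma offset_room u : (u < L)%N -> (u * (q - z) + (q - z) <= q.-1)%N.
Proof.
move=> lt_uL; rewrite addnC -mulSn -subn1; apply: leq_trans (leq_divM _ (q - z)).
by rewrite leq_mul2r lt_uL orbT.
Qed.

Lemma val_offset u : (u < L)%N -> nat_of_ord (offset u) = (u * (q - z))%N.
Proof. by move=> /offset_room room; rewrite /offset -natrM val_Zp_small //; lia. Qed.

Lemma offset_window u : (u < L)%N -> (offset u < z)%N.
Proof. by move=> lt_uL; rewrite val_offset //; have := offset_room lt_uL; lia. Qed.

(* The shift is a nonzero multiple of q - z of absolute value less than z,
   so it carries [z, q) into [0, z) modulo q. *)
Lemma offset_shift_window (x : 'Z_q) u v :
  (z <= x)%N -> (u < L)%N -> (v < L)%N -> u != v -> ((x + offset u - offset v)%R < z)%N.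
Proof.
move=> le_zx lt_uL lt_vL ne_uv; rewrite val_ZpB val_ZpD !val_offset //.
have : (x < q)%N := ltn_ord x; have := offset_room lt_uL; have := offset_room lt_vL.
have : (u * (q - z) + (q - z) <= v * (q - z) \/ v * (q - z) + (q - z) <= u * (q - z))%N.
  rewrite !(addnC _ (q - z)%N) -!mulSn !leq_mul2r.
  by case: ltngtP ne_uv => // _ _; rewrite orbT; [left|right].
by do 2 case: ifP; lia.
Qed.

Lemma Lpar_gt0 : (0 < z)%N -> (0 < L)%N.
Proof. by move=> z_gt0; rewrite divn_gt0 ?subn_gt0 //; lia. Qed.
End Offsets.

Lemma sumrB_single_diff (I : finType) (V : zmodType) (a a' : I -> V) (d : I) :
  (forall l, l != d -> a l = a' l) -> \sum_l a l - \sum_l a' l = a d - a' d.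
Proof.
move=> eq_off; rewrite (bigD1 d) //= [X in _ - X](bigD1 d) //=.
by rewrite (eq_bigr a') => [|l /eq_off //]; rewrite opprD addrACA subrr addr0.
Qed.

Section Entries.
Variables p z m : nat.
Local Notation q := p.+2.
Local Notation L := (Lpar q z).
Local Notation row := (rowT q m L).
Local Notation offset := (@offset p z).
Hypothesis lt_zq : (z < q)%N.

Definition sigma (r : row) : 'Z_q := \sum_(l < m) r.1 l - offset r.2.

Lemma Pentry_starE (r : row) b d : (Pentry r b d == None) = ((b - r.1 d)%R < z)%N.
Proof. by rewrite /Pentry exists_eq_sub_natrZp; case: ifP. Qed.

Lemma Centry_starE (r : row) b : (Centry r b == None) = ((sigma r - b)%R < z)%N.
Proof. by rewrite /Centry exists_eq_add_natrZp -/(offset _) -/(sigma r); case: ifP. Qed.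

Lemma PentryP (r : row) b d s : Pentry r b d = Some s ->
  [/\ (z <= (b - r.1 d)%R)%N, s ord_max = r.1 d - b - 1,
      s (lift ord_max d) = b - offset r.2 &
      forall l, l != d -> s (lift ord_max l) = r.1 l].
Proof.
rewrite /Pentry exists_eq_sub_natrZp; case: ifP => // /negbT; rewrite -leqNgt => nstar [<-].
by split=> [//|||l /negbTE ne_ld]; rewrite ffunE ?unlift_none ?liftK ?eqxx ?ne_ld.
Qed.

Lemma CentryP (r : row) b s : Centry r b = Some s ->
  [/\ (z <= (sigma r - b)%R)%N, s ord_max = b - sigma r - 1 &
      forall l, s (lift ord_max l) = r.1 l].
Proof.
rewrite /Centry exists_eq_add_natrZp -/(offset _) -/(sigma r).
case: ifP => // /negbT; rewrite -leqNgt => nstar [<-].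
by split=> [//|| l]; rewrite ffunE ?unlift_none ?liftK.
Qed.

Lemma Pentry_cross (j1 j2 : row) b1 d1 b2 d2 s :
  Pentry j1 b1 d1 = Some s -> Pentry j2 b2 d2 = Some s -> (j1, b1, d1) <> (j2, b2, d2) ->
  Pentry j1 b2 d2 = None.
Proof.
case: j1 j2 => [a1 e1] [a2 e2].
move=> /PentryP[nstar1 last1 mid1 off1] /PentryP[_ last2 mid2 off2] ne.
apply/eqP; rewrite Pentry_starE; cbn [fst snd] in *.
have [eq_d|ne_d] := eqVneq d1 d2; last first.
  have -> : b2 - a1 d2 = offset e2 by rewrite -off1 ?mid2 ?subKr // eq_sym.
  exact: offset_window.
subst d2.
have b2E : b2 = b1 - offset e1 + offset e2 by rewrite -mid1 mid2 subrK.
have [eq_e|ne_e] := eqVneq e1 e2.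
  have eq_b : b1 = b2 by rewrite b2E eq_e subrK.
  suff eq_a : a1 = a2 by case: ne; rewrite eq_a eq_e eq_b.
  apply/ffunP => l; have [->|ne_l] := eqVneq l d1; last by rewrite -off1 ?off2.
  by apply: (addIr (- b1 - 1)); rewrite !addrA -last1 last2 eq_b.
have -> : b2 - a1 d1 = (b1 - a1 d1) + offset e2 - offset e1 by rewrite b2E; ring.
by apply: offset_shift_window; rewrite // eq_sym.
Qed.

Lemma Pentry_Centry_cross (j1 j2 : row) b1 d b2 s :
  Pentry j1 b1 d = Some s -> Centry j2 b2 = Some s -> Centry j1 b2 = None.
Proof.
case: j1 j2 => [a1 e1] [a2 e2] /PentryP[_ last1 mid1 off1] /CentryP[_ last2 off2].
apply/eqP; rewrite Centry_starE /sigma; cbn [fst snd] in *.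
have a2_d : a2 d = b1 - offset e1 by rewrite -off2 mid1.
have diff_a : \sum_l a1 l - \sum_l a2 l = a1 d - a2 d.
  by apply: sumrB_single_diff => l ne_l; rewrite -off1 ?off2.
have b2E : b2 = \sum_l a2 l - offset e2 + a1 d - b1.
  by transitivity ((b2 - (\sum_l a2 l - offset e2) - 1) + (\sum_l a2 l - offset e2) + 1);
    [ring | rewrite -last2 last1; ring].
have -> : \sum_l a1 l - offset e1 - b2 = offset e2.
  by rewrite b2E -[X in X - offset e1](subrK (\sum_l a2 l)) diff_a a2_d; ring.
exact: offset_window.
Qed.

Lemma Centry_Pentry_cross (j1 j2 : row) b1 b2 d s :
  Centry j1 b1 = Some s -> Pentry j2 b2 d = Some s -> Pentry j1 b2 d = None.
Proof.
case: j1 j2 => [a1 e1] [a2 e2] /CentryP[_ _ off1] /PentryP[_ _ mid2 _].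
apply/eqP; rewrite Pentry_starE; cbn [fst snd] in *.
by rewrite -off1 mid2 subKr offset_window.
Qed.

Lemma Centry_cross (j1 j2 : row) b1 b2 s :
  Centry j1 b1 = Some s -> Centry j2 b2 = Some s -> (j1, b1) <> (j2, b2) ->
  Centry j1 b2 = None.
Proof.
case: j1 j2 => [a1 e1] [a2 e2] /CentryP[nstar1 last1 off1] /CentryP[_ last2 off2] ne.
have eq_a : a1 = a2 by apply/ffunP => l; rewrite -off1 off2.
subst a2; apply/eqP; rewrite Centry_starE.
have b2E : b2 = b1 - sigma (a1, e1) + sigma (a1, e2).
  by transitivity ((b2 - sigma (a1, e2) - 1) + sigma (a1, e2) + 1);
    [ring | rewrite -last2 last1; ring].
have [eq_e|ne_e] := eqVneq e1 e2.
  by case: ne; rewrite b2E eq_e subrK.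
have -> : sigma (a1, e1) - b2 = (sigma (a1, e1) - b1) + offset e2 - offset e1.
  by rewrite b2E /sigma; cbn [fst snd]; ring.
by apply: offset_shift_window; rewrite // eq_sym.
Qed.

Local Notation H := (@Harray q z m).

Lemma Harray_column_stars k : (0 < m)%N ->
  #|[set j : row | H j k == None]| = (z * L * q ^ (m - 1))%N.
Proof.
move=> m_gt0; rewrite cardsE card_prod_pred.
rewrite (eq_bigr (fun=> z * q ^ (m - 1))%N) ?sum_nat_const ?card_ord; first lia.
move=> u _; case: k => [[b d]|b].
  pose stars := [set a : {ffun 'I_m -> 'Z_q} | [pred x | (b - x)%R < z]%N (a d)].
  rewrite (@eq_card _ _ stars) => [|a]; last by rewrite !inE; apply: Pentry_starE.
  rewrite card_ffun_coord (card_pred_subr [pred y : 'Z_q | y < z]%N).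
  by rewrite card_ord_ltn ?card_ord ?subn1 // ltnW.
pose stars := [set a : {ffun 'I_m -> 'Z_q} |
                [pred x : 'Z_q | x < z]%N (\sum_l a l + (- offset u - b))].
rewrite (@eq_card _ _ stars) => [|a]; last by rewrite !inE addrA; apply: Centry_starE.
by rewrite (card_ffun_sum _ (Ordinal m_gt0)) card_ord_ltn ?card_ord ?subn1 // ltnW.
Qed.

Lemma Harray_cross (j1 j2 : row) k1 k2 s :
  H j1 k1 = Some s -> H j2 k2 = Some s -> (j1, k1) <> (j2, k2) -> H j1 k2 = None.
Proof.
case: k1 k2 => [[b1 d1]|b1] [[b2 d2]|b2] /= ent1 ent2 ne.
- apply: Pentry_cross ent1 ent2 _ => -[eq_j eq_b eq_d].
  by apply: ne; rewrite eq_j eq_b eq_d.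
- exact: Pentry_Centry_cross ent1 ent2.
- exact: Centry_Pentry_cross ent1 ent2.
- by apply: Centry_cross ent1 ent2 _ => -[eq_j eq_b]; apply: ne; rewrite eq_j eq_b.
Qed.

Lemma Harray_symbols : (0 < z)%N ->
  [set s | [exists j, exists k, H j k == Some s]] =
  [set s : symT q m | (s ord_max < q - z)%N].
Proof.
move=> z_gt0; apply/setP => s; rewrite !inE; apply/existsP/idP.
  move=> [j /existsP[[[b d]|b] /eqP /= ent]].
    have [nstar -> _ _] := PentryP ent.
    by rewrite (_ : j.1 d - b - 1 = - (b - j.1 d) - 1) ?val_Zp_opp_sub1_lt //; ring.
  have [nstar -> _] := CentryP ent.
  by rewrite (_ : b - sigma j - 1 = - (sigma j - b) - 1) ?val_Zp_opp_sub1_lt //; ring.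
move=> lt_s.
pose r : row := ([ffun l => s (lift ord_max l)], Ordinal (Lpar_gt0 lt_zq z_gt0)).
pose b := sigma r + s ord_max + 1.
exists r; apply/existsP; exists (inr b); rewrite /=.
case ent: (Centry r b) => [s'|]; last first.
  move/eqP: ent; rewrite Centry_starE.
  have -> : sigma r - b = - s ord_max - 1 by rewrite /b; ring.
  by rewrite ltnNge val_Zp_opp_sub1_ge.
have [_ last' off'] := CentryP ent.
apply/eqP; congr Some; apply/ffunP => i; case: (unliftP ord_max i) => [l ->|->].
  by rewrite off' ffunE.
by rewrite last' /b; ring.
Qed.
End Entries.

Theorem theorem3 (q z m : nat) :
  (2 <= q)%N -> (0 < z)%N -> (z < q)%N -> (0 < m)%N ->
  is_PDA (@Harray q z m)
    ((m + 1) * q) (Lpar q z * q ^ m) (z * Lpar q z * q ^ (m - 1)) ((q - z) * q ^ m).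
Proof.
case: q => [|[|p]] // _ z_gt0 lt_zq m_gt0.
split.
- by rewrite card_sum card_prod !card_ord Zp_cast; lia.
- by rewrite card_prod card_ffun !card_ord Zp_cast; lia.
- by move=> k; apply: Harray_column_stars.
- rewrite Harray_symbols // (card_ffun_coord [pred x : 'Z_p.+2 | x < p.+2 - z]%N).
  by rewrite card_ord_ltn ?leq_subr // !card_ord Zp_cast.
- exact: PDA_C3_of_cross (Harray_cross lt_zq).
Qed.
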